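(* Let $0<\sigma<\frac{1}{2}$. There is a constant $C_\sigma>0$ depending only on $\sigma$ such that for all $\xi_1,\xi_2\in\mathbb{R}$ with $\xi_1\leq\xi_2$, the function $$E_1(\xi;\xi_1,\xi_2)=\begin{cases} e^{\xi-\xi_1}-e^{\xi-\xi_2}, & \xi\leq\xi_1,\\ 0, & \text{otherwise},\end{cases}$$ satisfies $$\left(\int_{\mathbb{R}}|k|^{2\sigma}\,\big|\mathcal{F}(E_1(\cdot;\xi_1,\xi_2))(k)\big|^2\,dk\right)^{1/2}\leq C_\sigma\,(\xi_2-\xi_1).$$
   Context: The Fourier transform is normalized as $\mathcal{F}(f)(k)=\frac{1}{2\pi}\int_{\mathbb{R}}e^{-\mathrm{i}k\xi}f(\xi)\,d\xi$ for $k\in\mathbb{R}$. *)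

From HB Require Import structures.
From mathcomp Require Import all_boot all_order all_algebra.
From mathcomp Require Import all_classical all_reals all_analysis.
Set Implicit Arguments. Unset Strict Implicit. Unset Printing Implicit Defensive.
Import Order.TTheory GRing.Theory Num.Theory.
Local Open Scope classical_set_scope.
Local Open Scope ring_scope.

Definition E1 (R : realType) (xi1 xi2 : R) (xi : R) : R :=
  if xi <= xi1 then expR (xi - xi1) - expR (xi - xi2) else 0.

(* Real and imaginary parts of the Fourier transform
   F(f)(k) = (1/(2 pi)) \int e^{-i k xi} f(xi) dxi of a real-valued f:
   Re F(f)(k) = (1/(2pi)) \int cos(k xi) f(xi) dxi,
   Im F(f)(k) = -(1/(2pi)) \int sin(k xi) f(xi) dxi. *)
Definition fourier_re (R : realType) (f : R -> R) (k : R) : R :=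
  (2 * pi)^-1 * Rintegral lebesgue_measure setT (fun x => cos (k * x) * f x).

Definition fourier_im (R : realType) (f : R -> R) (k : R) : R :=
  - ((2 * pi)^-1 * Rintegral lebesgue_measure setT (fun x => sin (k * x) * f x)).

Definition fourier_sqnorm (R : realType) (f : R -> R) (k : R) : R :=
  fourier_re f k ^+ 2 + fourier_im f k ^+ 2.

From HB Require Import structures.
From mathcomp Require Import all_boot all_order all_algebra.
From mathcomp Require Import all_classical all_reals all_analysis.
From mathcomp Require Import ring lra measurable_realfun.
Import Order.TTheory GRing.Theory Num.Theory.
Import numFieldNormedType.Exports.
Local Open Scope classical_set_scope.
Local Open Scope ring_scope.

(* On ]-oo, xi1] the function E_1 is (e^{-xi1} - e^{-xi2}) e^xi, so its
   Fourier transform is computed exactly from the primitives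
   e^xi (cos (k xi) + k sin (k xi)) / (1 + k^2) and
   e^xi (sin (k xi) - k cos (k xi)) / (1 + k^2); the phases cancel in the
   modulus, leaving |F(E_1)(k)|^2 = (2 pi)^-2 (1 - e^{xi1 - xi2})^2 / (1 + k^2).
   As 1 - e^{-d} <= d, it remains that |k|^s / (1 + k^2) is integrable for
   s = 2 sigma < 1: it is dominated by 2 (1 + |k|)^(s - 2), whose integral
   is 4 / (1 - s). *)

Section improper_FTC.
Context {R : realType}.
Notation mu := (@lebesgue_measure R).

Lemma is_derive_NcompN (F : R -> R) (x d : R) :
  is_derive (- x) 1 F d -> is_derive x 1 (fun y => - F (- y)) d.
Proof.
move=> dF; have dFN : is_derive x 1 (F \o -%R) (d * -1).
  by apply: is_derive1_comp; exact: is_deriveNid.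
by rewrite -[d]opprK -[- d]mulrN1; exact: is_deriveN dFN.
Qed.

Lemma ge0_continuous_FTC2Ny (f F : R -> R) (b l : R) :
  continuous f -> (forall x, x <= b -> 0 <= f x) ->
  (forall x : R, is_derive x (1 : R) F (f x)) -> F x @[x --> -oo] --> l ->
  (\int[mu]_(x in `]-oo, b]) (f x)%:E = (F b - l)%:E)%E.
Proof.
move=> cf f0 dF Fl.
have dG (x : R) : is_derive x (1 : R) (fun y => - F (- y)) (f (- x)).
  exact: is_derive_NcompN (dF (- x)).
rewrite -[b]opprK ge0_integration_by_substitutionNy; last 2 first.
- exact: continuous_subspaceT.
- by move=> x; rewrite in_itv/= opprK => /ltW; exact: f0.
rewrite (@ge0_continuous_FTC2y R (f \o -%R) (fun x => - F (- x)) (- b) (- l)).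
- by rewrite !opprK -EFinB opprK addrC.
- by move=> x; rewrite lerNl; exact: f0.
- apply: continuous_subspaceT => x.
  exact: continuous_comp (@oppr_continuous R R x) (cf _).
- by apply: cvgN; exact: (cvgNy_compNP F (nbhs l)).1.
- by move=> x _; case: (dG x).
- apply: cvg_at_right_filter.
  have : derivable (fun y => - F (- y)) (- b) 1 by case: (dG (- b)).
  by move/derivable1_diffP/differentiable_continuous.
- by move=> x _; rewrite derive1E; case: (dG x).
Qed.

Lemma ge0_integral_fin_integrable (D : set R) (g : R -> R) (r : R) :
  measurable D -> measurable_fun D g -> (forall x, D x -> 0 <= g x) ->
  (\int[mu]_(x in D) (g x)%:E = r%:E)%E -> mu.-integrable D (EFin \o g).
Proof.
move=> mD mg g0 gr; apply/integrableP; split; first exact/measurable_EFinP.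
under eq_integral => x /[!inE] Dx do rewrite /= ger0_norm ?g0//.
by rewrite gr ltry.
Qed.

Lemma continuous_FTC2Ny (f F h H : R -> R) (b l m : R) :
  continuous f -> continuous h -> (forall x, x <= b -> `|f x| <= h x) ->
  (forall x : R, is_derive x (1 : R) F (f x)) ->
  (forall x : R, is_derive x (1 : R) H (h x)) ->
  F x @[x --> -oo] --> l -> H x @[x --> -oo] --> m ->
  \int[mu]_(x in `]-oo, b]) f x = F b - l.
Proof.
move=> cf ch fh dF dH Fl Hm.
(* f + h and h are nonnegative, hence integrable by the nonnegative case,
   and f is their difference. *)
have fh0 x : x <= b -> 0 <= f x + h x.
  by move=> /fh; rewrite ler_norml => /andP[+ _]; rewrite -lerBlDr sub0r.
have h0 x : x <= b -> 0 <= h x by move=> /fh; exact: le_trans.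
have cfh : continuous (f \+ h).
  by move=> x; apply: continuousD; [exact: cf | exact: ch].
have ifh : (\int[mu]_(x in `]-oo, b]) ((f \+ h) x)%:E =
    ((F \+ H) b - (l + m))%:E)%E.
  by apply: ge0_continuous_FTC2Ny => //; exact: cvgD.
have ih : (\int[mu]_(x in `]-oo, b]) (h x)%:E = (H b - m)%:E)%E.
  exact: ge0_continuous_FTC2Ny.
have fhI : mu.-integrable `]-oo, b] (EFin \o (f \+ h)).
  apply: ge0_integral_fin_integrable (ifh) => //.
  by apply: measurable_funTS; exact: continuous_measurable_fun.
have hI : mu.-integrable `]-oo, b] (EFin \o h).
  apply: ge0_integral_fin_integrable (ih) => //.
  by apply: measurable_funTS; exact: continuous_measurable_fun.
rewrite /Rintegral.
under eq_integral => x _ do rewrite -[f x](addrK (h x)) EFinB.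
by rewrite integralB_EFin // ifh ih /=; ring.
Qed.

End improper_FTC.

Section expR_trig_integrals.
Context {R : realType}.
Notation mu := (@lebesgue_measure R).
Implicit Types c k b x : R.

Lemma expR_cvgNy : @expR R x @[x --> -oo] --> 0.
Proof. by apply/cvgNy_compNP; exact: cvgr_expR. Qed.

Lemma mulr_expR_cvgNy c : c * expR x @[x --> -oo] --> 0.
Proof.
by rewrite -(mulr0 c); apply: cvgM; [exact: cvg_cst | exact: expR_cvgNy].
Qed.

Lemma mulr_expR_bounded_cvgNy c K (B : R -> R) : (forall x, `|B x| <= K) ->
  c * (expR x * B x) @[x --> -oo] --> 0.
Proof.
move=> BK.
have cK_expR := mulr_expR_cvgNy (`|c| * K).
apply: (@squeeze_cvgr _ _ _ _ (fun x => - (`|c| * K * expR x)) _ _ _ 0 _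
  cK_expR).
  apply: nearW => x /=; rewrite -ler_norml !normrM (ger0_norm (expR_ge0 x)).
  by rewrite mulrAC -mulrA !ler_wpM2l ?expR_ge0.
by rewrite -oppr0; exact: cvgN.
Qed.

Lemma continuous_mulr_compMl_expR c k (g : R -> R) : continuous g ->
  continuous (fun x => c * (g (k * x) * expR x)).
Proof.
move=> cg x.
apply: (@continuousM _ _ (fun=> c) (fun y => g (k * y) * expR y)).
  exact: cvg_cst.
apply: (@continuousM _ _ (fun y => g (k * y)) expR).
  exact: (continuous_comp (@mulrl_continuous _ k x) (cg _)).
exact: continuous_expR.
Qed.

Lemma continuous_mulr_expR c : continuous (fun x => c * expR x).
Proof.
move=> x; apply: (@continuousM _ _ (fun=> c) expR); first exact: cvg_cst.
exact: continuous_expR.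
Qed.

Lemma is_derive_mulrl k x : is_derive x (1 : R) ( *%R k) k.
Proof.
by have := is_deriveZ k (is_derive_id x (1 : R)); rewrite [_ *: 1]mulr1.
Qed.

Lemma is_derive_cosMl k x :
  is_derive x (1 : R) (fun y => cos (k * y)) (- sin (k * x) * k).
Proof. exact: is_derive1_comp (is_derive_cos _) (is_derive_mulrl k x). Qed.

Lemma is_derive_sinMl k x :
  is_derive x (1 : R) (fun y => sin (k * y)) (cos (k * x) * k).
Proof. exact: is_derive1_comp (is_derive_sin _) (is_derive_mulrl k x). Qed.

Lemma is_derive_mulr_expR c x :
  is_derive x (1 : R) (fun y => c * expR y) (c * expR x).
Proof. exact: is_deriveZ. Qed.

Lemma is_derive_cos_expR_primitive c k x : is_derive x (1 : R)
  (fun y => c / (1 + k ^+ 2) * (expR y * (cos (k * y) + k * sin (k * y))))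
  (c * (cos (k * x) * expR x)).
Proof.
have dP := is_deriveM (is_derive_expR x)
  (is_deriveD (is_derive_cosMl k x) (is_deriveZ k (is_derive_sinMl k x))).
apply: is_derive_eq (is_deriveZ (c / (1 + k ^+ 2)) dP) _.
have k2 : 1 + k ^+ 2 != 0 by rewrite gt_eqF // ltr_pwDl // sqr_ge0.
rewrite /GRing.scale /= !fctE /GRing.scale /=.
change (k *: sin (k * x)) with (k * sin (k * x)).
by field.
Qed.

Lemma is_derive_sin_expR_primitive c k x : is_derive x (1 : R)
  (fun y => c / (1 + k ^+ 2) * (expR y * (sin (k * y) - k * cos (k * y))))
  (c * (sin (k * x) * expR x)).
Proof.
have dP := is_deriveM (is_derive_expR x)
  (is_deriveB (is_derive_sinMl k x) (is_deriveZ k (is_derive_cosMl k x))).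
apply: is_derive_eq (is_deriveZ (c / (1 + k ^+ 2)) dP) _.
have k2 : 1 + k ^+ 2 != 0 by rewrite gt_eqF // ltr_pwDl // sqr_ge0.
rewrite /GRing.scale /= !fctE /GRing.scale /=.
change (k *: cos (k * x)) with (k * cos (k * x)).
by field.
Qed.

Lemma normr_mulr_expR_le c t x :
  `|t| <= 1 -> `|c * (t * expR x)| <= `|c| * expR x.
Proof.
move=> t1; rewrite !normrM (ger0_norm (expR_ge0 x)) ler_wpM2l //.
exact: ler_piMl (expR_ge0 x) t1.
Qed.

Lemma Rintegral_itvNy_cos_expR c k b :
  \int[mu]_(x in `]-oo, b]) (c * (cos (k * x) * expR x)) =
  c / (1 + k ^+ 2) * (expR b * (cos (k * b) + k * sin (k * b))).
Proof.
pose P y := c / (1 + k ^+ 2) * (expR y * (cos (k * y) + k * sin (k * y))).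
have P0 : P x @[x --> -oo] --> 0.
  apply: (mulr_expR_bounded_cvgNy _ (1 + `|k|)) => x.
  rewrite (le_trans (ler_normD _ _)) // normrM lerD ?cos_max //.
  by rewrite ler_piMr ?sin_max.
rewrite -[RHS]subr0.
apply: (continuous_FTC2Ny (fun x => c * (cos (k * x) * expR x)) P
  _ _ _ _ _ _ _ _ _ (is_derive_mulr_expR `|c|) P0 (mulr_expR_cvgNy `|c|)).
- by apply: continuous_mulr_compMl_expR => x; exact: continuous_cos.
- exact: continuous_mulr_expR.
- by move=> x _; apply: normr_mulr_expR_le; exact: cos_max.
- by move=> x; exact: is_derive_cos_expR_primitive.
Qed.

Lemma Rintegral_itvNy_sin_expR c k b :
  \int[mu]_(x in `]-oo, b]) (c * (sin (k * x) * expR x)) =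
  c / (1 + k ^+ 2) * (expR b * (sin (k * b) - k * cos (k * b))).
Proof.
pose P y := c / (1 + k ^+ 2) * (expR y * (sin (k * y) - k * cos (k * y))).
have P0 : P x @[x --> -oo] --> 0.
  apply: (mulr_expR_bounded_cvgNy _ (1 + `|k|)) => x.
  rewrite (le_trans (ler_normB _ _)) // normrM lerD ?sin_max //.
  by rewrite ler_piMr ?cos_max.
rewrite -[RHS]subr0.
apply: (continuous_FTC2Ny (fun x => c * (sin (k * x) * expR x)) P
  _ _ _ _ _ _ _ _ _ (is_derive_mulr_expR `|c|) P0 (mulr_expR_cvgNy `|c|)).
- by apply: continuous_mulr_compMl_expR => x; exact: continuous_sin.
- exact: continuous_mulr_expR.
- by move=> x _; apply: normr_mulr_expR_le; exact: sin_max.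
- by move=> x; exact: is_derive_sin_expR_primitive.
Qed.

End expR_trig_integrals.

Section fourier_E1.
Context {R : realType}.
Notation mu := (@lebesgue_measure R).

Lemma Rintegral_if_le (g : R -> R) (b : R) :
  \int[mu]_x (if x <= b then g x else 0) = \int[mu]_(x in `]-oo, b]) g x.
Proof.
rewrite [RHS]Rintegral_mkcond; apply: eq_Rintegral => x _.
by rewrite patchE mem_setE in_itv.
Qed.

Lemma mul_E1 (xi1 xi2 : R) (t : R -> R) : (fun x => t x * E1 xi1 xi2 x) =
  (fun x => if x <= xi1 then (expR (- xi1) - expR (- xi2)) * (t x * expR x)
            else 0).
Proof.
apply/funext => x; rewrite /E1; case: ifP => _; last by rewrite mulr0.
by rewrite !expRD; ring.
Qed.

Lemma fourier_sqnorm_E1 (xi1 xi2 k : R) : fourier_sqnorm (E1 xi1 xi2) k =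
  (2 * pi)^-1 ^+ 2 * (1 - expR (xi1 - xi2)) ^+ 2 / (1 + k ^+ 2).
Proof.
rewrite /fourier_sqnorm /fourier_re /fourier_im !mul_E1 !Rintegral_if_le.
rewrite Rintegral_itvNy_cos_expR Rintegral_itvNy_sin_expR.
have <- : (expR (- xi1) - expR (- xi2)) * expR xi1 = 1 - expR (xi1 - xi2).
  by rewrite mulrBl -!expRD addNr expR0 [- xi2 + _]addrC.
have k2 : 1 + k ^+ 2 != 0 by rewrite gt_eqF // ltr_pwDl // sqr_ge0.
have := cos2Dsin2 (k * xi1).
move: (cos _) (sin _) (expR xi1) (expR (- xi1) - _) (2 * pi)^-1.
move=> C S e c p CS.
transitivity (p ^+ 2 * (c * e) ^+ 2 / (1 + k ^+ 2) ^+ 2 *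
  ((C + k * S) ^+ 2 + (S - k * C) ^+ 2)); first by field.
have -> : (C + k * S) ^+ 2 + (S - k * C) ^+ 2 =
    (1 + k ^+ 2) * (C ^+ 2 + S ^+ 2) by ring.
by rewrite CS mulr1; field.
Qed.

End fourier_E1.

Section powR_integrals.
Context {R : realType}.
Notation mu := (@lebesgue_measure R).
Implicit Types q s k x : R.

Lemma continuous_powR_1Dnorm q : continuous (fun k : R => (1 + `|k|) `^ q).
Proof.
move=> x.
apply: (@continuous_comp _ _ _ (fun k : R => 1 + `|k|) (fun z : R => z `^ q)).
  by apply: continuousD; [exact: cvg_cst | exact: norm_continuous].
have [dx _] := is_derive1_powR q (ltr_pwDl ltr01 (normr_ge0 x)).
exact/differentiable_continuous/derivable1_diffP.
Qed.

Lemma powR_1D_cvgy q : q < 0 -> (1 + x) `^ q @[x --> +oo] --> 0.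
Proof.
move=> q0; apply/cvgrPdist_le => e e0.
set X := e `^ q^-1.
have X0 : 0 < X by rewrite /X powR_gt0.
have eX : e = (X `^ (- q))^-1.
  by rewrite -powRN opprK /X -powRrM mulVf ?powRr1 ?(ltW e0) ?(lt_eqF q0).
near=> x.
have Xx : X <= x by near: x; apply: nbhs_pinfty_ge; rewrite num_real.
rewrite sub0r normrN ger0_norm ?powR_ge0 // -[q]opprK powRN eX.
rewrite lef_pV2 ?posrE ?powR_gt0 //; last lra.
apply: ge0_ler_powR; rewrite ?nnegrE; lra.
Unshelve. all: by end_near.
Qed.

Lemma is_derive_powR_1D q x : q != -1 -> -1 < x ->
  is_derive x (1 : R) (fun y => (q + 1)^-1 * (1 + y) `^ (q + 1)) ((1 + x) `^ q).
Proof.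
move=> q1 x1.
have x0 : 0 < 1 + x by lra.
have dP := is_derive1_comp (is_derive1_powR (q + 1) x0)
  (is_deriveD (is_derive_cst (1 : R) x 1) (is_derive_id x 1)).
apply: is_derive_eq (is_deriveZ (q + 1)^-1 dP) _.
have q10 : q + 1 != 0 by rewrite addr_eq0.
rewrite /GRing.scale /= addrK.
by field.
Qed.

Lemma integral_powR_1Dnorm q : q < -1 ->
  (\int[mu]_x ((1 + `|x|) `^ q)%:E = (2 / (- q - 1))%:E)%E.
Proof.
move=> q1; have qN1 : q != -1 by rewrite lt_eqF.
pose P y := (q + 1)^-1 * (1 + y) `^ (q + 1).
have dP x : 0 < x -> is_derive x (1 : R) P ((1 + x) `^ q).
  by move=> x0; apply: is_derive_powR_1D => //; lra.
rewrite ge0_symfun_integralT; last 3 first.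
- by move=> x; exact: powR_ge0.
- exact: continuous_powR_1Dnorm.
- by move=> x; rewrite /= normrN.
rewrite -set_itvcy.
rewrite (@ge0_continuous_FTC2y R _ P 0 0).
- rewrite /P addr0 powR1 mulr1 -EFinB -EFinM; congr EFin.
  by rewrite sub0r -invrN opprD.
- by move=> x _; exact: powR_ge0.
- exact/continuous_subspaceT/continuous_powR_1Dnorm.
- rewrite -(mulr0 (q + 1)^-1); apply: cvgM; first exact: cvg_cst.
  by apply: powR_1D_cvgy; lra.
- by move=> x x0; case: (dP x x0).
- have [dP0 _] := is_derive_powR_1D q 0 qN1 (ltrN10 R).
  have c0 : {for 0, continuous P}.
    exact/differentiable_continuous/derivable1_diffP.
  exact: cvg_at_right_filter c0.
- move=> x; rewrite in_itv /= andbT => x0.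
  by rewrite derive1E; have [_ ->] := dP x x0; rewrite ger0_norm // ltW.
Qed.

Lemma measurable_powR_norm_div_1Dsqr s :
  measurable_fun setT (fun k : R => `|k| `^ s / (1 + k ^+ 2)).
Proof.
apply: measurable_funM.
  by apply: (measurableT_comp (measurable_powR s)); exact: normr_measurable.
apply: continuous_measurable_fun => x.
apply: (@continuousV _ _ (fun k : R => 1 + k ^+ 2)).
  by rewrite gt_eqF // ltr_pwDl // sqr_ge0.
exact/differentiable_continuous/derivable1_diffP.
Qed.

Lemma powR_norm_div_1Dsqr_le s k : 0 <= s ->
  `|k| `^ s / (1 + k ^+ 2) <= 2 * (1 + `|k|) `^ (s - 2).
Proof.
move=> s0; set y := 1 + `|k|.
have y0 : 0 < y by rewrite ltr_pwDl.
have k20 : 0 < 1 + k ^+ 2 by rewrite ltr_pwDl // sqr_ge0.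
have ky : `|k| `^ s <= y `^ s.
  apply: ge0_ler_powR; rewrite ?nnegrE //; first exact: ltW.
  by rewrite /y; have := normr_ge0 k; lra.
have y2 : y ^+ 2 <= 2 * (1 + k ^+ 2).
  rewrite /y -[k ^+ 2]real_normK ?num_real //.
  by have := sqr_ge0 (`|k| - 1); nra.
rewrite powRB ?(gt_eqF y0) ?implybT // powR_mulrn ?(ltW y0) // mulrCA.
apply: le_trans (_ : _ <= y `^ s / (1 + k ^+ 2)) _.
  by rewrite ler_pM2r ?invr_gt0.
by rewrite ler_wpM2l ?powR_ge0 // ler_pdivlMr ?exprn_gt0 // mulrC ler_pdivrMr.
Qed.

Lemma integral_powR_norm_div_1Dsqr_le s : 0 <= s < 1 ->
  (\int[mu]_k (`|k| `^ s / (1 + k ^+ 2))%:E <= (4 / (1 - s))%:E)%E.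
Proof.
move=> /andP[s0 s1].
apply: (@le_trans _ _ (\int[mu]_k (2 * (1 + `|k|) `^ (s - 2))%:E)%E).
  apply: ge0_le_integral => //.
  - by move=> k _; rewrite lee_fin divr_ge0 ?powR_ge0 ?addr_ge0 ?sqr_ge0.
  - by apply/measurable_EFinP; exact: measurable_powR_norm_div_1Dsqr.
  - apply/measurable_EFinP; apply: measurable_funM => //.
    by apply: continuous_measurable_fun; exact: continuous_powR_1Dnorm.
  - by move=> k _; rewrite lee_fin powR_norm_div_1Dsqr_le.
under eq_integral do rewrite EFinM.
rewrite ge0_integralZl_EFin //; last first.
  apply/measurable_EFinP; apply: continuous_measurable_fun.
  exact: continuous_powR_1Dnorm.
rewrite integral_powR_1Dnorm; last lra.
have -> : - (s - 2) - 1 = 1 - s by ring.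
by rewrite -EFinM lee_fin mulrA -natrM.
Qed.

End powR_integrals.

Theorem lemma3p1 (R : realType) (sigma : R) :
  0 < sigma < 2^-1 ->
  exists C : R, 0 < C /\
    forall xi1 xi2 : R, xi1 <= xi2 ->
      (\int[lebesgue_measure]_(k in [set: R])
          ((`|k| `^ (2 * sigma)) * fourier_sqnorm (E1 xi1 xi2) k)%:E
        <= ((C * (xi2 - xi1)) ^+ 2)%:E)%E.
Proof.
move=> /andP[sigma0 sigma_half]; set s := 2 * sigma.
have s01 : 0 <= s < 1 by apply/andP; split; rewrite /s; lra.
set K := 4 / (1 - s); have K0 : 0 < K by rewrite divr_gt0 // subr_gt0; lra.
pose p : R := (2 * pi)^-1; have p0 : 0 < p by rewrite invr_gt0 mulr_gt0 ?pi_gt0.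
exists (p * Num.sqrt K); split; first by rewrite mulr_gt0 ?sqrtr_gt0.
move=> xi1 xi2 le12; set a := 1 - expR (xi1 - xi2).
have a0 : 0 <= a by rewrite subr_ge0 expR_le1 subr_le0.
have a_le : a <= xi2 - xi1 by have := expR_ge1Dx (xi1 - xi2); rewrite /a; lra.
under eq_integral do rewrite fourier_sqnorm_E1 -/p -/a mulrCA EFinM.
rewrite ge0_integralZl_EFin //; last 3 first.
- by move=> k _; rewrite lee_fin divr_ge0 ?powR_ge0 ?addr_ge0 ?sqr_ge0.
- by apply/measurable_EFinP; exact: measurable_powR_norm_div_1Dsqr.
- by rewrite mulr_ge0 ?sqr_ge0.
apply: le_trans (lee_wpmul2l _ (integral_powR_norm_div_1Dsqr_le s s01)) _.
  by rewrite lee_fin mulr_ge0 ?sqr_ge0.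
rewrite -EFinM lee_fin !exprMn sqr_sqrtr ?(ltW K0) // -/K mulrAC.
rewrite ler_wpM2r ?(ltW K0) // ler_wpM2l ?sqr_ge0 //.
by rewrite ler_sqr ?nnegrE // subr_ge0.
Qed.
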